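(* Let $\mathbf L=\{L_1,\dots,L_n\}$ be a finite multiset of positive rationals, $k\in\mathbb N_{>0}$, and let $(I,f_l,f_u)$ be an admissible restriction. Then $l^\star=\mathcal C(I,f_l,f_u)^{(k')}$, the $k'$-th largest element (with multiplicity) of $\mathcal C(I,f_l,f_u)$, where $k'=k-\sum_{i\in I}(f_l(i)-1)$.
   Context: $m(l)=\sum_{i=1}^n\lfloor L_i/l\rfloor$, $c(l)=\sum_i(\lceil L_i/l\rceil-1)$; $l$ feasible iff $m(l)\ge k$; $l^\star$ is the unique optimal cut length (feasible length minimizing $c$ among feasible lengths; equals the largest feasible length). Candidate multiset: $\mathcal C(I,f_l,f_u)=\biguplus_{i\in I}\{L_i/j: j\in\mathbb N,\ f_l(i)\le j\le f_u(i)\}$ (one occurrence per pair $(i,j)$). A triple $(I,f_l,f_u)$ with $I\subseteq[1..n]$, $f_l,f_u:I\to\mathbb N_{>0}$ is an admissible restriction if (i) for all $i\in I$, $f_l(i)=1$ or $L_i/(f_l(i)-1)$ is infeasible; (ii) for all $i\in I$, $L_i/f_u(i)$ is feasible; (iii) for all $i'\notin I$, $L_{i'}$ is feasible and $L_{i'}\ne l^\star$. $\mathbf A^{(r)}$ denotes the $r$-th largest element of multiset $\mathbf A$ counted with multiplicity. *)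

From HB Require Import structures.
From mathcomp Require Import all_boot all_order all_algebra.
Set Implicit Arguments. Unset Strict Implicit. Unset Printing Implicit Defensive.
Import Order.TTheory GRing.Theory Num.Theory.
Local Open Scope ring_scope.

(* The multiset L = {L_1,...,L_n} is given as a family L : 'I_n -> rat. *)

Definition mcount (n : nat) (L : 'I_n -> rat) (l : rat) : int :=
  \sum_(i < n) Num.floor (L i / l).

Definition feasible (n : nat) (L : 'I_n -> rat) (k : nat) (l : rat) : bool :=
  (0 < l) && (k%:Z <= mcount L l).

Definition is_lstar (n : nat) (L : 'I_n -> rat) (k : nat) (lstar : rat) : Prop :=
  feasible L k lstar /\ (forall l : rat, feasible L k l -> l <= lstar).

Definition admissible (n : nat) (L : 'I_n -> rat) (k : nat) (lstar : rat)
    (I : {set 'I_n}) (fl fu : 'I_n -> nat) : Prop :=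
  (forall i, i \in I -> (0 < fl i)%N /\ (0 < fu i)%N) /\
  (forall i, i \in I -> fl i = 1%N \/ ~~ feasible L k (L i / (fl i).-1%:R)) /\
  (forall i, i \in I -> feasible L k (L i / (fu i)%:R)) /\
  (forall i, i \notin I -> feasible L k (L i) /\ L i != lstar).

Definition candidates (n : nat) (L : 'I_n -> rat) (I : {set 'I_n})
    (fl fu : 'I_n -> nat) : seq rat :=
  flatten [seq [seq L i / j%:R | j <- index_iota (fl i) (fu i).+1]
          | i <- enum I].

Definition rth_largest (A : seq rat) (r : nat) : rat :=
  nth 0 (sort (fun x y : rat => y <= x) A) r.-1.

From mathcomp Require Import all_boot all_order all_algebra zify.

(* For a piece x and a length l > 0, the number of j >= 1 with l <= x / j is
   floor(x / l), and the number with l < x / j is ceil(x / l) - 1.  Optimality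
   of l* gives sum_i (ceil(L_i / l* ) - 1) < k <= sum_i floor(L_i / l* ): the
   right inequality is feasibility of l*, the left one holds because m, which
   only jumps at the values L_i / j, reaches that sum just to the right of l*,
   where it is infeasible.  Admissibility says that for i in I the window
   [f_l(i), f_u(i)] contains every such j except the f_l(i) - 1 smallest ones,
   and that pieces outside I contribute nothing.  Hence fewer than k'
   candidates exceed l* while at least k' candidates are >= l*, so l* is the
   k'-th largest candidate. *)

Set Implicit Arguments.
Unset Strict Implicit.
Unset Printing Implicit Defensive.
Import Order.TTheory GRing.Theory Num.Theory.
Local Open Scope ring_scope.

Lemma sorted_nth_count (T : eqType) (x0 : T) (e : rel T) (P : pred T) (t : seq T) p :
  transitive e -> sorted e t -> (forall a b, e a b -> P b -> P a) ->
  (p < size t)%N -> P (nth x0 t p) = (p < count P t)%N.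
Proof.
move=> e_tr + P_up; elim: t p => [//|y t IH] p /= t_sorted lt_p_t.
have y_le := order_path_min e_tr t_sorted.
have count0 : ~~ P y -> count P t = 0%N.
  move=> Py; apply/eqP; rewrite -leqn0 leqNgt -has_count; apply/hasPn => z zt.
  by apply: contra Py; apply: P_up; exact: (allP y_le).
case: p lt_p_t => [|p] /= lt_p_t; first by case: (P y) count0 => // ->.
by rewrite IH ?(path_sorted t_sorted) //; case: (boolP (P y)) => // /count0 ->.
Qed.

Section NthLargest.
Variables (d : Order.disp_t) (T : orderType d).
Local Open Scope order_scope.

Lemma nth_sort_ge_eq (x0 x : T) (s : seq T) r :
  (count (fun y => (x < y)%O) s < r <= count (fun y => (x <= y)%O) s)%N ->
  nth x0 (sort (fun a b => b <= a) s) r.-1 = x.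
Proof.
case/andP=> lt_gt_r le_r_ge.
set t := sort _ s.
have t_sorted : sorted (fun a b => b <= a) t := sort_sorted (fun a b => le_total b a) s.
have ge_trans : transitive (fun a b : T => b <= a) by move=> a b c /[swap]; apply: le_trans.
have count_t P : count P t = count P s := permP (permEl (perm_sort _ s)) P.
have r_pos : (0 < r)%N by apply: leq_ltn_trans lt_gt_r.
have r_size : (r.-1 < size t)%N.
  by rewrite size_sort prednK //; apply: leq_trans le_r_ge (count_size _ _).
apply/le_anti/andP; split.
- rewrite leNgt (@sorted_nth_count _ x0 _ (fun y => x < y) _ _ ge_trans) //.
    by rewrite count_t -ltnS prednK // -leqNgt.
  by move=> a b /[swap]; apply: lt_le_trans.
- rewrite (@sorted_nth_count _ x0 _ (fun y => x <= y) _ _ ge_trans) //.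
    by rewrite count_t prednK.
  by move=> a b /[swap]; apply: le_trans.
Qed.

End NthLargest.

Lemma count_iota_prefix (P : pred nat) (f m n : nat) : (0 < m)%N ->
  (forall j, (0 < j)%N -> P j = (j <= f)%N) ->
  count P (iota m n) = (minn (m + n) f.+1 - m)%N.
Proof.
move=> m_pos P_prefix; elim: n => [|n IH]; first by rewrite /= addn0; lia.
rewrite -addn1 iotaD count_cat IH /= P_prefix; last lia.
by case: (leqP (m + n) f) => /=; lia.
Qed.

Lemma count_index_iota_prefix (P : pred nat) (f a b : nat) : (0 < a)%N ->
  (forall j, (0 < j)%N -> P j = (j <= f)%N) -> (a.-1 <= f <= b)%N ->
  (a.-1 + count P (index_iota a b.+1))%N = f.
Proof.
move=> a_pos P_prefix /andP[le_a_f le_f_b].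
rewrite /index_iota (count_iota_prefix _ a_pos P_prefix).
by case: a a_pos le_a_f => // a _ /=; lia.
Qed.

Section Pieces.
Variable R : archiRealFieldType.

Definition npieces (x l : R) : nat := `|Num.floor (x / l)|%N.
Definition ncuts (x l : R) : nat := `|Num.ceil (x / l) - 1|%N.

Variables (x l : R).
Hypotheses (x_gt0 : 0 < x) (l_gt0 : 0 < l).

Lemma floor_div_npieces : Num.floor (x / l) = (npieces x l)%:Z.
Proof. by rewrite /npieces gez0_abs // floor_ge0 ltW // divr_gt0. Qed.

Lemma le_div_npieces j : (0 < j)%N -> (l <= x / j%:R) = (j <= npieces x l)%N.
Proof.
move=> j_pos; rewrite ler_pdivlMr ?ltr0n // mulrC -ler_pdivlMr //.
by rewrite -lez_nat -floor_div_npieces floor_ge_int.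
Qed.

Lemma lt_div_ncuts j : (0 < j)%N -> (l < x / j%:R) = (j <= ncuts x l)%N.
Proof.
move=> j_pos; rewrite ltr_pdivlMr ?ltr0n // mulrC -ltr_pdivlMr //.
have : 0 < Num.ceil (x / l) by rewrite ceil_gt0 divr_gt0.
rewrite -(ceil_gt_int (x / l) j) -lez_nat /ncuts.
by move: (Num.ceil _) => c c_pos; rewrite gez0_abs; lia.
Qed.

Lemma ncuts_le_npieces : (ncuts x l <= npieces x l)%N.
Proof.
case: (posnP (ncuts x l)) => [-> // | ncuts_pos].
by rewrite -le_div_npieces // ltW // lt_div_ncuts.
Qed.

Lemma npieces_le j : (0 < j)%N -> x / j%:R <= l -> (npieces x l <= j)%N.
Proof.
move=> j_pos le_l; rewrite leqNgt -le_div_npieces // -ltNge.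
apply: lt_le_trans le_l; rewrite ltr_pM2l // ltf_pV2 ?posrE ?ltr0n //.
by rewrite ltr_nat.
Qed.

Lemma pred_le_ncuts a : (a = 1%N \/ l < x / a.-1%:R) -> (a.-1 <= ncuts x l)%N.
Proof. by case: a => [|[|a]] // [// | ]; rewrite lt_div_ncuts. Qed.

End Pieces.

Lemma exists_gt_lower_bound (R : realDomainType) (x : R) (s : seq R) :
  {in s, forall z, x < z} -> exists2 y, x < y & {in s, forall z, y <= z}.
Proof.
elim: s => [_ | z s IH] /=; first by exists (x + 1) => //; rewrite ltrDl.
move=> gt_x; have [|y lt_x_y le_y] := IH; first by move=> w ws; rewrite gt_x ?inE ?ws ?orbT.
exists (Num.min y z); first by rewrite lt_min lt_x_y gt_x ?mem_head.
by move=> w; rewrite inE ge_min => /predU1P[-> | /le_y ->]; rewrite ?lexx ?orbT.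
Qed.

Section CutLengths.
Variables (n : nat) (L : 'I_n -> rat) (k : nat).
Hypothesis L_gt0 : forall i, 0 < L i.

Lemma mcount_npieces l : 0 < l -> mcount L l = (\sum_i npieces (L i) l)%:Z.
Proof.
move=> l_gt0; rewrite /mcount (big_morph Posz PoszD (erefl 0%:Z)).
by apply: eq_bigr => i _; apply: floor_div_npieces.
Qed.

Lemma mcount_right_limit l : 0 < l ->
  exists2 l', l < l' & (\sum_i ncuts (L i) l)%:Z <= mcount L l'.
Proof.
move=> l_gt0.
set s := [seq L i / (ncuts (L i) l)%:R | i <- enum 'I_n & (0 < ncuts (L i) l)%N].
have [|l' lt_l_l' le_l'_s] := @exists_gt_lower_bound _ l s.
  move=> z /mapP[i]; rewrite mem_filter => /andP[cuts_pos _] ->.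
  by rewrite lt_div_ncuts.
have l'_gt0 := lt_trans l_gt0 lt_l_l'.
exists l' => //; rewrite mcount_npieces // lez_nat; apply: leq_sum => i _.
case: (posnP (ncuts (L i) l)) => [-> // | cuts_pos].
rewrite -le_div_npieces //; apply: le_l'_s; apply/mapP; exists i => //.
by rewrite mem_filter cuts_pos mem_enum.
Qed.

Lemma feasible_le l l0 : 0 < l -> l <= l0 -> feasible L k l0 -> feasible L k l.
Proof.
move=> l_gt0 le_l_l0 /andP[_ k_le]; rewrite /feasible l_gt0 (le_trans k_le) //.
apply: ler_sum => i _; apply: le_floor.
by rewrite ler_pM2l // lef_pV2 ?posrE // (lt_le_trans l_gt0).
Qed.

Lemma is_lstar_lt_infeasible lstar x :
  is_lstar L k lstar -> 0 < x -> ~~ feasible L k x -> lstar < x.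
Proof.
move=> [lstar_feas _] x_gt0; apply: contraNT; rewrite -leNgt => le_x_lstar.
exact: feasible_le le_x_lstar lstar_feas.
Qed.

Lemma is_lstar_count_bounds lstar : is_lstar L k lstar ->
  (\sum_i ncuts (L i) lstar < k <= \sum_i npieces (L i) lstar)%N.
Proof.
case=> /andP[lstar_gt0 k_le] lstar_max.
rewrite mcount_npieces // lez_nat in k_le; rewrite k_le andbT.
have [l' lt_lstar_l' le_m] := mcount_right_limit lstar_gt0.
have : ~~ feasible L k l' by apply/negP => /lstar_max; rewrite leNgt lt_lstar_l'.
rewrite /feasible (lt_trans lstar_gt0) //= -ltNge => lt_m_k.
by rewrite -ltz_nat (le_lt_trans le_m).
Qed.

End CutLengths.

Lemma count_candidates n (L : 'I_n -> rat) (I : {set 'I_n}) (fl fu : 'I_n -> nat)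
    (P : pred rat) :
  count P (candidates L I fl fu) =
  (\sum_(i in I) count (fun j => P (L i / j%:R)) (index_iota (fl i) (fu i).+1))%N.
Proof.
rewrite /candidates count_flatten sumnE !big_map big_enum /=.
by apply: eq_bigr => i _; rewrite count_map.
Qed.

Section AdmissibleRestriction.
Variables (n : nat) (L : 'I_n -> rat) (k : nat) (lstar : rat).
Variables (I : {set 'I_n}) (fl fu : 'I_n -> nat).
Hypotheses (L_gt0 : forall i, 0 < L i) (lstar_opt : is_lstar L k lstar).
Hypothesis adm : admissible L k lstar I fl fu.

Let lstar_gt0 : 0 < lstar. Proof. by case: lstar_opt => /andP[]. Qed.

Lemma admissible_bounds i : i \in I ->
  [&& 0 < fl i, (fl i).-1 <= ncuts (L i) lstar & npieces (L i) lstar <= fu i]%N.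
Proof.
case: adm => pos [low [up _]] iI; have [fl_pos fu_pos] := pos i iI.
rewrite fl_pos npieces_le ?andbT //; last by case: lstar_opt => _; apply; apply: up.
apply: pred_le_ncuts => //; case: (low i iI) => [|infeas]; first by left.
case: (eqVneq (fl i) 1%N) => [|fl_neq1]; first by left.
right; apply: is_lstar_lt_infeasible infeas => //.
by rewrite divr_gt0 // ltr0n -subn1 subn_gt0 ltn_neqAle eq_sym fl_neq1.
Qed.

Lemma npieces_notin i : i \notin I -> npieces (L i) lstar = 0%N.
Proof.
case: adm => _ [_ [_ out]] /out[feas neq]; case: lstar_opt => _ /(_ _ feas) le_Li.
apply/eqP; rewrite -leqn0 leqNgt -le_div_npieces // divr1 -ltNge.
by rewrite lt_neqAle neq.
Qed.

Lemma restricted_count_ge :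
  (\sum_(i in I) (fl i).-1 + count (fun c => (lstar <= c)%R) (candidates L I fl fu))%N =
  (\sum_i npieces (L i) lstar)%N.
Proof.
rewrite count_candidates -big_split [RHS](bigID (mem I)) /=.
rewrite [X in (_ + X)%N]big1 ?addn0 => [|i /npieces_notin //].
apply: eq_bigr => i /admissible_bounds /and3P[fl_pos le_fl le_fu].
apply: count_index_iota_prefix => [//|j j_pos|]; first exact: le_div_npieces.
by rewrite le_fu (leq_trans le_fl (ncuts_le_npieces _ _)).
Qed.

Lemma restricted_count_gt :
  (\sum_(i in I) (fl i).-1 + count (fun c => (lstar < c)%R) (candidates L I fl fu))%N =
  (\sum_i ncuts (L i) lstar)%N.
Proof.
rewrite count_candidates -big_split [RHS](bigID (mem I)) /=.
rewrite [X in (_ + X)%N]big1 ?addn0 => [|i /npieces_notin Li0]; last first.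
  by apply/eqP; rewrite -leqn0 -Li0 ncuts_le_npieces.
apply: eq_bigr => i /admissible_bounds /and3P[fl_pos le_fl le_fu].
apply: count_index_iota_prefix => [//|j j_pos|]; first exact: lt_div_ncuts.
by rewrite le_fl (leq_trans (ncuts_le_npieces _ _) le_fu).
Qed.

End AdmissibleRestriction.

Theorem mainTheorem10 (n : nat) (L : 'I_n -> rat) (k : nat) (lstar : rat)
    (I : {set 'I_n}) (fl fu : 'I_n -> nat) :
  (forall i, 0 < L i) ->
  (0 < k)%N ->
  is_lstar L k lstar ->
  admissible L k lstar I fl fu ->
  let k' : int := k%:Z - (\sum_(i in I) ((fl i).-1)%N)%:Z in
  [/\ 1 <= k', k' <= (size (candidates L I fl fu))%:Z &
      lstar = rth_largest (candidates L I fl fu) `|k'|%N].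
Proof.
move=> L_gt0 _ lstar_opt adm k'.
have /andP[lt_cuts_k le_k_pieces] := is_lstar_count_bounds L_gt0 lstar_opt.
rewrite -(restricted_count_gt L_gt0 lstar_opt adm) in lt_cuts_k.
rewrite -(restricted_count_ge L_gt0 lstar_opt adm) in le_k_pieces.
set C := candidates L I fl fu in lt_cuts_k le_k_pieces *.
set S := (\sum_(i in I) (fl i).-1)%N in k' lt_cuts_k le_k_pieces *.
have lt_S_k : (S < k)%N := leq_ltn_trans (leq_addr _ _) lt_cuts_k.
have -> : k' = (k - S)%N by rewrite /k' subzn // ltnW.
rewrite !lez_nat subn_gt0 lt_S_k leq_subLR (leq_trans le_k_pieces) ?leq_add2l ?count_size //.
by rewrite /rth_largest (@nth_sort_ge_eq _ _ 0 lstar) // ltn_subRL lt_cuts_k leq_subLR.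
Qed.
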